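(* For any explicit Runge--Kutta method $(A,b)$, the step-size coefficient satisfies $\gamma(A,b)\le R(\varphi_{A,b})$.
   Context: An $m$-stage explicit Runge--Kutta method has strictly lower-triangular $A=(a_{ij})\in\mathbb{R}^{m\times m}$ and $b\in\mathbb{R}^m$. Its stability function is the polynomial $\varphi_{A,b}(z)=1+zb^\top(I-zA)^{-1}e$, $e=(1,\dots,1)^\top$. The radius of absolute monotonicity is $R(\varphi)=\sup\{r\ge0:\ \varphi^{(j)}(z)\ge0\text{ for all }j\ge0\text{ and all }z\in[-r,0]\}$. Positivity polynomials: for variables $\xi^j_\ell$ ($1\le j\le m$, $\ell\in\mathbb{Z}$) and a sequence $(u_\ell)_{\ell\in\mathbb{Z}}$, define $y^i_\ell=u_\ell+\sum_{j<i}a_{ij}\xi^j_\ell(y^j_{\ell-1}-y^j_\ell)$ and $\tilde u_\ell=u_\ell+\sum_ib_i\xi^i_\ell(y^i_{\ell-1}-y^i_\ell)$ (this is one ERK step for $u_k'=q_k(u,t)(u_{k-1}-u_k)/\Delta x$ with $\xi^j_k=\frac{\Delta t}{\Delta x}q_k(y^j,t_n+c_j\Delta t)$). Then $\tilde u_k=\sum_{i=0}^mP_i(\xi)u_{k-i}$ with polynomials $P_i$ (independent of $k$) in the $m(m+1)/2$ variables $\xi^j_\ell$, $1\le j\le m$, $k-(m-j)\le\ell\le k$. The step-size coefficient is $\gamma(A,b)=\sup\{\delta\ge0: P_i(\xi)\ge0$ for all $0\le i\le m$, all $\xi\in[0,\delta]^{m(m+1)/2}\}$ (or $0$ if empty).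 *)

From HB Require Import structures.
From mathcomp Require Import all_boot all_order all_algebra.
From mathcomp Require Import classical_sets reals constructive_ereal ereal.
Set Implicit Arguments. Unset Strict Implicit. Unset Printing Implicit Defensive.
Import Order.TTheory GRing.Theory Num.Theory.
Local Open Scope ring_scope.
Local Open Scope classical_set_scope.

Section ERK.
Variable R : realType.

Definition strictly_lower (m : nat) (A : 'M[R]_m) : Prop :=
  forall i j : 'I_m, (i <= j)%N -> A i j = 0.

Definition stab_poly (m : nat) (A : 'M[R]_m) (b : 'cV[R]_m) : {poly R} :=
  1 + 'X * ((map_mx polyC b)^T
              *m invmx (1%:M - 'X *: map_mx polyC A)
              *m const_mx 1) (ord0 : 'I_1) (ord0 : 'I_1).

Definition abs_mono_on (phi : {poly R}) (r : R) : Prop :=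
  forall (j : nat) (z : R), - r <= z <= 0 -> 0 <= (phi^`(j)).[z].

(* Radius of absolute monotonicity (value 0 when no r >= 0 qualifies). *)
Definition radius_abs_mono (phi : {poly R}) : \bar R :=
  ereal_sup ([set (r%:E) | r in [set r : R | 0 <= r /\ abs_mono_on phi r]]
             `|` [set 0%E]).

(* nat-indexed access to matrix entries (0 outside the range). *)
Definition mxnat (p q : nat) (M : 'M[R]_(p, q)) (i j : nat) : R :=
  match (insub i : option 'I_p), (insub j : option 'I_q) with
  | Some i0, Some j0 => M i0 j0
  | _, _ => 0
  end.

(* Stage values y^0, ..., y^(n-1) (stages indexed from 0):
   y^i_l = u_l + sum_{j<i} a_{ij} xi^j_l (y^j_{l-1} - y^j_l). *)
Fixpoint stages (m : nat) (A : 'M[R]_m) (xi : nat -> int -> R) (u : int -> R)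
    (n : nat) : seq (int -> R) :=
  match n with
  | 0 => [::]
  | n'.+1 =>
      let s := stages A xi u n' in
      rcons s (fun l : int => u l + \sum_(j < n')
                 mxnat A n' j * xi j l
                 * (nth (fun _ => 0) s j (l - 1) - nth (fun _ => 0) s j l))
  end.

Definition erk_step (m : nat) (A : 'M[R]_m) (b : 'cV[R]_m)
    (xi : nat -> int -> R) (u : int -> R) (l : int) : R :=
  let s := stages A xi u m in
  u l + \sum_(i < m) b i ord0 * xi i l
          * (nth (fun _ => 0) s i (l - 1) - nth (fun _ => 0) s i l).

(* Positivity polynomial P_i (at k = 0): u~_0 = sum_i P_i(xi) u_{-i}, so P_i(xi)
   is u~_0 evaluated on the unit sequence concentrated at l = -i. *)
Definition pos_poly (m : nat) (A : 'M[R]_m) (b : 'cV[R]_m) (i : nat)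
    (xi : nat -> int -> R) : R :=
  erk_step A b xi (fun l : int => if l == - (i%:Z) then 1 else 0) 0.

Definition pos_on_box (m : nat) (A : 'M[R]_m) (b : 'cV[R]_m) (delta : R) : Prop :=
  forall (i : nat) (xi : nat -> int -> R),
    (i <= m)%N ->
    (forall (j : nat) (l : int), 0 <= xi j l <= delta) ->
    0 <= pos_poly A b i xi.

(* Step-size coefficient gamma(A,b) (value 0 if no delta >= 0 qualifies). *)
Definition step_size_coef (m : nat) (A : 'M[R]_m) (b : 'cV[R]_m) : \bar R :=
  ereal_sup ([set (d%:E) | d in [set d : R | 0 <= d /\ pos_on_box A b d]]
             `|` [set 0%E]).

End ERK.

(* Freeze all [xi^j_l] to a single value [d]. One step then commutes with the
   shift [(S u)_l = u_(l-1)]: stage [j] applies [Y_j(d (S - 1))], where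
   [(I - X A) Y = e], and the whole step applies [phi(d (S - 1))] with
   [phi = 1 + X b^T Y] the stability function. Hence [P_N(d, ..., d)] is the
   coefficient of [X^N] in [phi(d (X - 1))], which by Taylor's formula at [-d]
   is [phi^(N)(-d) d^N / N!]. Nonnegativity of the [P_N] on [[0, delta]] thus
   gives [phi^(N) >= 0] on [[-delta, 0)] for [N <= m]; the point [0] follows by
   continuity, and derivatives of order [> m] vanish because [deg phi <= m]. *)

From mathcomp Require Import all_boot all_order all_algebra.
From mathcomp Require Import classical_sets reals constructive_ereal ereal.
From mathcomp Require Import polyrcf lra zify.
Set Implicit Arguments. Unset Strict Implicit. Unset Printing Implicit Defensive.
Import Order.TTheory GRing.Theory Num.Theory.
Local Open Scope ring_scope.

Lemma nth_iter_rcons (T : Type) (x0 : T) (s : nat -> seq T) (g : nat -> T) :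
  s 0 = [::] -> (forall n, s n.+1 = rcons (s n) (g n)) ->
  forall n j, (j < n)%N -> nth x0 (s n) j = g j.
Proof.
move=> s0 sS.
have size_s n : size (s n) = n.
  by elim: n => [|n IH]; rewrite ?s0 // sS size_rcons IH.
elim=> [//|n IH] j; rewrite sS nth_rcons size_s ltnS leq_eqVlt.
by case/orP=> [/eqP->|ltjn]; rewrite ?ltnn ?eqxx // ltjn IH.
Qed.

Section IntCoefficients.
Variable R : comNzRingType.
Implicit Types (p : {poly R}) (k : int).

Definition coefz p k : R := if k is Posz n then p`_n else 0.

Lemma coefzD p p' k : coefz (p + p') k = coefz p k + coefz p' k.
Proof. by case: k => n /=; rewrite ?coefD ?addr0. Qed.

Lemma coefzN p k : coefz (- p) k = - coefz p k.
Proof. by case: k => n /=; rewrite ?coefN ?oppr0. Qed.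

Lemma coefz_sum (I : Type) (r : seq I) (F : I -> {poly R}) k :
  coefz (\sum_(i <- r) F i) k = \sum_(i <- r) coefz (F i) k.
Proof.
apply: (big_morph (coefz^~ k)) => [p p'|]; first exact: coefzD.
by case: k => n /=; rewrite ?coef0.
Qed.

Lemma coefz1 k : coefz 1 k = (k == 0)%:R.
Proof. by case: k => [[|n]|n] //=; rewrite coef1. Qed.

Lemma coefzCM c p k : coefz (c%:P * p) k = c * coefz p k.
Proof. by case: k => n /=; rewrite ?coefCM ?mulr0. Qed.

Lemma coefzXM p k : coefz ('X * p) k = coefz p (k - 1).
Proof. by case: k => [[|n]|n] /=; rewrite ?coefXM //= subn1. Qed.

(* Under [\Po d ('X - 1)], ['X] acts on coefficients as the shift
   [k |-> k - 1]: the right-hand side is one Runge--Kutta combination applied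
   to the unit sequence at [0]. *)
Lemma coefz_comp_step (I : Type) (r : seq I) (c : I -> R) (P : I -> {poly R})
    (d : R) k :
  coefz ((1 + 'X * \sum_(i <- r) (c i)%:P * P i) \Po (d%:P * ('X - 1))) k
  = (k == 0)%:R + \sum_(i <- r) c i * d
      * (coefz (P i \Po (d%:P * ('X - 1))) (k - 1)
         - coefz (P i \Po (d%:P * ('X - 1))) k).
Proof.
set q := d%:P * ('X - 1).
rewrite comp_polyD -polyC1 comp_polyC polyC1 coefzD coefz1 comp_polyM comp_polyX.
rewrite raddf_sum /= mulr_sumr coefz_sum; congr (_ + _); apply: eq_bigr => i _.
rewrite comp_polyM comp_polyC mulrCA {1}/q -[_ * _ * (P i \Po q)]mulrA !coefzCM.
by rewrite mulrBl mul1r coefzD coefzN coefzXM mulrA.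
Qed.

End IntCoefficients.

Lemma coef_comp_poly_affine (R : comNzRingType) (p : {poly R}) (c d : R) n :
  (p \Po (c%:P + d%:P * 'X))`_n = p^`N(n).[c] * d ^+ n.
Proof.
rewrite /comp_poly (@nderiv_taylor_wide _ (size p + n.+1)); first last.
- by rewrite size_map_polyC leq_addr.
- exact: mulrC.
rewrite coef_sum.
under eq_bigr do rewrite nderivn_map horner_map /= exprMn -rmorphXn /= mulrA
  -polyCM coefCM coefXn.
have lt_n : (n < size p + n.+1)%N by rewrite addnS ltnS leq_addl.
rewrite (bigD1 (Ordinal lt_n)) //= eqxx mulr1 big1 ?addr0 // => i.
by rewrite -val_eqE /= eq_sym => /negbTE->; rewrite mulr0.
Qed.

Lemma horner_ge0_from_left (R : rcfType) (p : {poly R}) (x d : R) : 0 < d ->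
  (forall z, x - d <= z < x -> 0 <= p.[z]) -> 0 <= p.[x].
Proof.
move=> d_gt0 p_ge0; rewrite leNgt; apply/negP => px_lt0.
have /(poly_cont x p)[e e_gt0 near_x] : 0 < - p.[x] by rewrite oppr_gt0.
pose h := Num.min d (e / 2).
have h_gt0 : 0 < h by rewrite lt_min d_gt0 divr_gt0.
have h_le_d : h <= d by rewrite ge_min lexx.
have h_le_e2 : h <= e / 2 by rewrite ge_min lexx orbT.
have : 0 <= p.[x - h] by apply: p_ge0; apply/andP; split; lra.
have : `|x - h - x| < e by rewrite addrAC subrr add0r normrN gtr0_norm //; lra.
move=> /near_x; rewrite ltr_norml => /andP[_]; lra.
Qed.

Section ExplicitRungeKutta.
Variables (R : realType) (m : nat) (A : 'M[R]_m) (b : 'cV[R]_m).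

Fixpoint stage_polys (n : nat) : seq {poly R} :=
  if n is n'.+1 then
    rcons (stage_polys n')
      (1 + 'X * \sum_(j < n') (mxnat A n' j)%:P * (stage_polys n')`_j)
  else [::].

Definition stage_poly (j : nat) : {poly R} := (stage_polys j.+1)`_j.

Definition erk_poly : {poly R} :=
  1 + 'X * \sum_(i < m) (b i ord0)%:P * stage_poly i.

Lemma stage_polys_nth n j : (j < n)%N ->
  (stage_polys n)`_j = 1 + 'X * \sum_(i < j) (mxnat A j i)%:P * (stage_polys j)`_i.
Proof. exact: (@nth_iter_rcons _ 0 stage_polys _ erefl (fun => erefl)). Qed.

Lemma nth_stage_polys n j : (j < n)%N -> (stage_polys n)`_j = stage_poly j.
Proof. by move=> ltjn; rewrite /stage_poly !stage_polys_nth. Qed.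

Lemma stage_polyE j :
  stage_poly j = 1 + 'X * \sum_(i < j) (mxnat A j i)%:P * stage_poly i.
Proof.
rewrite {1}/stage_poly stage_polys_nth //; congr (1 + 'X * _).
by apply: eq_bigr => i _; rewrite nth_stage_polys.
Qed.

Lemma size_step_poly (I : Type) (r : seq I) (c : I -> R) (P : I -> {poly R}) n :
  (forall i, size (P i) <= n)%N ->
  (size (1 + 'X * \sum_(i <- r) (c i)%:P * P i)%R <= n.+1)%N.
Proof.
move=> size_P; rewrite (leq_trans (size_polyD _ _)) // geq_max size_poly1.
have size_sum : (size (\sum_(i <- r) (c i)%:P * P i)%R <= n)%N.
  apply: (big_ind (fun p : {poly R} => size p <= n)%N) => [|p p' sp sp'|i _].
  - by rewrite size_poly0.
  - by rewrite (leq_trans (size_polyD _ _)) // geq_max sp sp'.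
  - have := size_polyMleq (c i)%:P (P i); have := size_polyC_leq1 (c i).
    have := size_P i; lia.
have := size_polyMleq 'X (\sum_(i <- r) (c i)%:P * P i)%R; rewrite size_polyX.
move: size_sum; lia.
Qed.

Lemma size_stage_poly j : (size (stage_poly j) <= j.+1)%N.
Proof.
elim/ltn_ind: j => j IH; rewrite stage_polyE size_step_poly // => i.
exact: leq_trans (IH i (ltn_ord i)) (ltn_ord i).
Qed.

Lemma size_erk_poly : (size erk_poly <= m.+1)%N.
Proof.
apply: size_step_poly => i.
exact: leq_trans (size_stage_poly i) (ltn_ord i).
Qed.

Section ConstantStepRatio.
Variables (d : R) (N : nat).
Let xi : nat -> int -> R := fun _ _ => d.
Let u : int -> R := fun l => if l == - (N%:Z) then 1 else 0.
Let q : {poly R} := d%:P * ('X - 1).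

Let stage (n : nat) : int -> R := fun l => u l + \sum_(j < n)
  mxnat A n j * xi j l * (nth (fun _ => 0) (stages A xi u n) j (l - 1)
                          - nth (fun _ => 0) (stages A xi u n) j l).

Lemma nth_stages n j : (j < n)%N -> nth (fun _ => 0) (stages A xi u n) j = stage j.
Proof. exact: nth_iter_rcons. Qed.

Lemma stage_coefz j l : stage j l = coefz (stage_poly j \Po q) (l + N%:Z).
Proof.
elim/ltn_ind: j l => j IH l.
rewrite stage_polyE coefz_comp_step; congr (_ + _).
  by rewrite /u addr_eq0; case: eqP.
by apply: eq_bigr => i _; rewrite !nth_stages // !IH // addrAC.
Qed.

Lemma pos_poly_const : pos_poly A b N xi = erk_poly^`N(N).[- d] * d ^+ N.
Proof.
rewrite -coef_comp_poly_affine.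
have -> : (- d)%:P + d%:P * 'X = q by rewrite /q mulrBr mulr1 polyCN addrC.
change (erk_poly \Po q)`_N with (coefz (erk_poly \Po q) (0 + N%:Z)).
rewrite coefz_comp_step /pos_poly /erk_step; congr (_ + _).
  by rewrite add0r eq_sym oppr_eq0; case: eqP.
by apply: eq_bigr => i _; rewrite !nth_stages // !stage_coefz [0 - 1 + _]addrAC.
Qed.

End ConstantStepRatio.

Lemma erk_nderiv_ge0 d n z : pos_on_box A b d -> (n <= m)%N ->
  - d <= z < 0 -> 0 <= erk_poly^`N(n).[z].
Proof.
move=> box le_nm /andP[le_dz lt_z0].
have := box n (fun _ _ => - z) le_nm.
rewrite pos_poly_const opprK pmulr_lge0 ?exprn_gt0 ?oppr_gt0 //.
by apply=> _ _; apply/andP; split; lra.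
Qed.

Hypothesis A_lower : strictly_lower A.

Lemma mxnat_lower i j : (i <= j)%N -> mxnat A i j = 0.
Proof.
rewrite /mxnat => le_ij.
case: insubP => [i0 _ val_i0|_] //; case: insubP => [j0 _ val_j0|_] //.
by apply: A_lower; rewrite val_i0 val_j0.
Qed.

Lemma sum_row_lower (i : 'I_m) (Y : nat -> {poly R}) :
  \sum_(j < m) (A i j)%:P * Y j = \sum_(j < i) (mxnat A i j)%:P * Y j.
Proof.
have mxnatE (j : 'I_m) : A i j = mxnat A i j by rewrite /mxnat !valK.
under eq_bigr do rewrite mxnatE.
rewrite -(big_mkord xpredT (fun j => (mxnat A i j)%:P * Y j)).
rewrite (big_cat_nat (n := i)) ?(ltnW (ltn_ord i)) //= big_mkord.
rewrite [X in _ + X]big_nat_cond [X in _ + X]big1 ?addr0 // => j.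
case/andP=> /andP[le_ij _] _.
by rewrite mxnat_lower // mul0r.
Qed.

Let stage_mx : 'M[{poly R}]_m := 1%:M - 'X *: map_mx polyC A.
Let stage_col : 'cV[{poly R}]_m := \col_(i < m) stage_poly i.

Lemma mul_stage_mx_col : stage_mx *m stage_col = const_mx 1.
Proof.
apply/matrixP => i k; rewrite !mxE.
under eq_bigr do rewrite !mxE mulrBl.
rewrite sumrB (bigD1 i) //= eqxx mul1r big1 ?addr0; last first.
  by move=> j /negbTE nji; rewrite eq_sym nji mul0r.
under [X in _ - X]eq_bigr do rewrite -mulrA.
by rewrite -mulr_sumr sum_row_lower [stage_poly i]stage_polyE addrK.
Qed.

Lemma stage_mx_unit : stage_mx \in unitmx.
Proof.
rewrite unitmxE det_trig.
  by rewrite big1 ?unitr1 // => i _; rewrite !mxE eqxx A_lower // mulr0 subr0.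
apply/is_trig_mxP => i j lt_ij; rewrite !mxE A_lower ?(ltnW lt_ij) // mulr0 subr0.
by case: eqP lt_ij => // ->; rewrite ltnn.
Qed.

Lemma stab_poly_erk : stab_poly A b = erk_poly.
Proof.
rewrite /stab_poly -/stage_mx -mulmxA -mul_stage_mx_col mulKmx ?stage_mx_unit //.
by rewrite !mxE; congr (_ + _ * _); apply: eq_bigr => i _; rewrite !mxE.
Qed.

Lemma pos_on_box_abs_mono d : 0 < d -> pos_on_box A b d -> abs_mono_on (stab_poly A b) d.
Proof.
move=> d_gt0 box j z /andP[le_dz le_z0]; rewrite stab_poly_erk.
have [lt_mj|le_jm] := ltnP m j.
  by rewrite derivn_poly0 ?horner0 // (leq_trans size_erk_poly).
have deriv_ge0 z' : - d <= z' < 0 -> 0 <= erk_poly^`(j).[z'].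
  move=> /(erk_nderiv_ge0 box le_jm) ge0.
  by rewrite nderivn_def hornerMn mulrn_wge0.
have [lt_z0|ge_z0] := ltP z 0; first by rewrite deriv_ge0 ?le_dz.
have -> : z = 0 by apply/le_anti; rewrite le_z0.
by apply: (horner_ge0_from_left d_gt0) => z'; rewrite sub0r; apply: deriv_ge0.
Qed.

End ExplicitRungeKutta.

Theorem proposition1 (R : realType) (m : nat) (A : 'M[R]_m) (b : 'cV[R]_m) :
  strictly_lower A ->
  (step_size_coef A b <= radius_abs_mono (stab_poly A b))%E.
Proof.
move=> A_lower; apply: ereal_sup_le => _ [[d [d_ge0 box] <-]|->]; last by right.
have [->|d_neq0] := eqVneq d 0; first by right.
left; exists d => //; split => //.
by apply: pos_on_box_abs_mono; rewrite ?lt_def ?d_neq0.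
Qed.
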